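(* Let $g:\mathbb{R}^m\to\overline{\mathbb{R}}$ be a polyhedral function and $(\bar z,\bar\lambda)\in\mathrm{gph}\,\partial g$. Then its strict second subderivative is $${\rm d}_s^2 g(\bar z,\bar\lambda)(w)=\delta_{K_g(\bar z,\bar\lambda)-K_g(\bar z,\bar\lambda)}(w)\quad\text{for all } w\in\mathbb{R}^m.$$
   Context: A proper function $g:\mathbb{R}^m\to\overline{\mathbb{R}}$ is polyhedral if its epigraph is a polyhedral convex set; $\partial g$ is the convex-analysis subdifferential; $\delta_C$ is the indicator function of $C$. For $z$ with $g(z)$ finite, ${\rm d} g(z)(w)=\liminf_{t\searrow 0,\,w'\to w}\frac{g(z+tw')-g(z)}{t}$ and for $\lambda\in\partial g(z)$ the critical cone is $K_g(z,\lambda)=\{w\mid\langle\lambda,w\rangle={\rm d} g(z)(w)\}$. For $f:\mathbb{R}^n\to\overline{\mathbb{R}}$, $f(x)$ finite, $v\in\partial f(x)$ and $t>0$, the second-order difference quotient is $\Delta_t^2 f(x,v)(w)=\frac{f(x+tw)-f(x)-t\langle v,w\rangle}{\frac12 t^2}$. The strict second subderivative at $\bar x$ for $\bar v\in\partial f(\bar x)$ is ${\rm d}_s^2 f(\bar x,\bar v)(w)=\liminf \Delta_t^2 f(x,v)(w')$, the liminf taken as $t\searrow0$, $w'\to w$, $(x,v)\to(\bar x,\bar v)$ with $(x,v)\in\mathrm{gph}\,\partial f$ and $f(x)\to f(\bar x)$. *)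

From HB Require Import structures.
From mathcomp Require Import all_boot all_order all_algebra.
From mathcomp Require Import all_classical all_reals all_analysis.
Set Implicit Arguments. Unset Strict Implicit. Unset Printing Implicit Defensive.
Import Order.TTheory GRing.Theory Num.Theory.
Import numFieldNormedType.Exports.
Local Open Scope classical_set_scope.
Local Open Scope ring_scope.

Section Defs.
Variables (R : realType) (m : nat).
Implicit Types (g : 'rV[R]_m -> \bar R) (x z w v : 'rV[R]_m).

Definition dotv (u v : 'rV[R]_m) : R := \sum_(i < m) u ord0 i * v ord0 i.

Definition proper_fun g : Prop :=
  (forall x, g x != -oo%E) /\ exists x, g x \is a fin_num.

Definition epigraph g : set ('rV[R]_m * R) := [set p | (g p.1 <= p.2%:E)%E].

Definition polyhedral_set (C : set ('rV[R]_m * R)) : Prop :=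
  exists (k : nat) (A : 'I_k -> 'rV[R]_m) (c b : 'I_k -> R),
    C = [set p | forall i, dotv (A i) p.1 + c i * p.2 <= b i].

Definition polyhedral_fun g : Prop := proper_fun g /\ polyhedral_set (epigraph g).

Definition subdiff g x v : Prop :=
  g x \is a fin_num /\ forall y, (g x + (dotv v (y - x))%:E <= g y)%E.

(* liminf_{t \searrow 0, w' -> w} (g(z + t w') - g(z)) / t *)
Definition subderiv g z w : \bar R :=
  ereal_sup [set ereal_inf
    [set ((g (z + t *: w')%R - g z) * (t^-1)%:E)%E
       | t in [set t : R | 0 < t < e] & w' in [set w' | `|w' - w| < e]]
    | e in [set e : R | 0 < e]].

Definition crit_cone g z lam : set 'rV[R]_m :=
  [set w | (dotv lam w)%:E = subderiv g z w].

Definition diffquot2 g x v t w : \bar R :=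
  ((g (x + t *: w)%R - g x - (t * dotv v w)%:E) * ((t ^+ 2 / 2)^-1)%:E)%E.

(* strict second subderivative: liminf of diffquot2 g x v t w' as t \searrow 0,
   w' -> w, (x,v) -> (xb,vb) with v \in \partial g(x), g(x) -> g(xb) *)
Definition strict_second_subderiv g xb vb w : \bar R :=
  ereal_sup [set ereal_inf
    [set q | exists (x v w' : 'rV[R]_m) (t : R),
        [/\ 0 < t < e, `|w' - w| < e, `|x - xb| < e & `|v - vb| < e] /\
        [/\ subdiff g x v, `|fine (g x) - fine (g xb)| < e
          & q = diffquot2 g x v t w']]
    | e in [set e : R | 0 < e]].

Definition indicator (C : set 'rV[R]_m) (w : 'rV[R]_m) : \bar R :=
  if `[< C w >] then 0%E else +oo%E.

Definition set_minus_self (C : set 'rV[R]_m) : set 'rV[R]_m :=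
  [set u - u' | u in C & u' in C].

End Defs.

From HB Require Import structures.
From mathcomp Require Import all_boot all_order all_algebra.
From mathcomp Require Import all_classical all_reals all_analysis.
From mathcomp Require Import ring lra.

(* Write epi g = {(y, a) | <A_i, y> + c_i a <= b_i}.  The critical cone is the
   polyhedral cone K = {u | <A_i + c_i lam, u> <= 0 for all i active at zb},
   along whose rays g is affine near zb.  If w = k1 - k2 with k1, k2 in K, the base
   point zb + t k2 and the direction k1 - k2 give second-order quotients equal to 0,
   and subgradients make all of them nonnegative.  Otherwise some active constraint
   j vanishes on K while <A_j + c_j lam, w> > 0.  By Farkas' lemma, every
   (x, v) in gph dg with v close to lam already has lam in dg(x); then x - zb lies
   in K, so j is still active at x, and constraint j makes the second-order
   quotients at (x, v) in directions close to w arbitrarily large. *)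

Set Implicit Arguments.
Unset Strict Implicit.
Unset Printing Implicit Defensive.

Import Order.TTheory GRing.Theory Num.Theory.
Import numFieldNormedType.Exports.
Local Open Scope classical_set_scope.
Local Open Scope ring_scope.

Section DotProduct.
Variables (R : realType) (m : nat).
Implicit Types (u v w : 'rV[R]_m) (a : R).

Lemma dotvC u v : dotv u v = dotv v u.
Proof. by apply: eq_bigr => i _; rewrite mulrC. Qed.

Lemma dotvDr u v w : dotv u (v + w) = dotv u v + dotv u w.
Proof. by rewrite /dotv -big_split; apply: eq_bigr => i _; rewrite mxE mulrDr. Qed.

Lemma dotvZr a u v : dotv u (a *: v) = a * dotv u v.
Proof. by rewrite /dotv mulr_sumr; apply: eq_bigr => i _; rewrite mxE mulrCA. Qed.

Lemma dotvNr u v : dotv u (- v) = - dotv u v.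
Proof. by rewrite -scaleN1r dotvZr mulN1r. Qed.

Lemma dotvBr u v w : dotv u (v - w) = dotv u v - dotv u w.
Proof. by rewrite dotvDr dotvNr. Qed.

Lemma dotv0r u : dotv u 0 = 0.
Proof. by rewrite -(scale0r 0) dotvZr mul0r. Qed.

Lemma dotvDl u v w : dotv (v + w) u = dotv v u + dotv w u.
Proof. by rewrite !(dotvC _ u) dotvDr. Qed.

Lemma dotvZl a u v : dotv (a *: u) v = a * dotv u v.
Proof. by rewrite !(dotvC _ v) dotvZr. Qed.

Lemma dotvBl u v w : dotv (v - w) u = dotv v u - dotv w u.
Proof. by rewrite !(dotvC _ u) dotvBr. Qed.

Lemma dotv_sumr (I : finType) u (F : I -> 'rV[R]_m) :
  dotv u (\sum_i F i) = \sum_i dotv u (F i).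
Proof. exact: (big_morph _ (dotvDr u) (dotv0r u)). Qed.

Lemma normr_dotv_le u v : `|dotv u v| <= m%:R * `|u| * `|v|.
Proof.
have entry_le (x : 'rV[R]_m) i : `|x ord0 i| <= `|x|.
  rewrite [X in _ <= X]/Num.norm /= mx_normrE.
  exact: (le_bigmax _ (fun ij : 'I_1 * 'I_m => `|x ij.1 ij.2|) (ord0, i)).
apply: le_trans (ler_norm_sum _ _ _) _.
have -> : m%:R * `|u| * `|v| = \sum_(i < m) `|u| * `|v|.
  by rewrite sumr_const card_ord -mulrA mulr_natl.
by apply: ler_sum => i _; rewrite normrM ler_pM.
Qed.

End DotProduct.

Section NearZero.
Variables (R : realType) (m : nat).

Lemma near0_exists (P : R -> Prop) :
  (\forall t \near 0^'+, P t) -> exists2 t, 0 < t & P t.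
Proof.
by move=> hP; have [t []] := filter_ex (filterI (nbhs_right_gt 0) hP); exists t.
Qed.

Lemma near0_mulr_lt (C e : R) : 0 < e -> \forall t \near 0^'+, t * C < e.
Proof.
move=> e0; near=> t.
have t0 : 0 < t by near: t; exact: nbhs_right_gt.
have tC : t * (`|C| + 1) < e.
  rewrite -ltr_pdivlMr ?ltr_wpDl //; near: t.
  by apply: nbhs_right_lt; rewrite divr_gt0 ?ltr_wpDl.
have : t * C <= t * `|C| by rewrite ler_pM2l ?ler_norm.
nra.
Unshelve. all: by end_near.
Qed.

Lemma near_dotv_gt0 (a l w : 'rV[R]_m) (s M : R) : 0 < dotv (a + s *: l) w ->
  \forall e \near 0^'+, forall w' v t, `|w' - w| < e -> `|v - l| < e -> 0 < t < e ->
    0 < dotv a w' + s * (dotv v w' + t * M / 2).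
Proof.
set gam := dotv _ w => gam0.
set C := m%:R * `|a| + `|s| * (m%:R * (`|w| + 1) + m%:R * `|l| + `|M|).
near=> e => w' v t w'w vl /andP[t0 te].
have e1 : e < 1 by near: e; exact: nbhs_right_lt.
have eC : e * C < gam by near: e; exact: near0_mulr_lt.
set Z := dotv (v - l) w' + dotv l (w' - w) + t * M / 2.
have -> : dotv a w' + s * (dotv v w' + t * M / 2) = gam + dotv a (w' - w) + s * Z.
  by rewrite /gam /Z dotvDl dotvZl !dotvBr dotvBl; ring.
have le_e (x y : 'rV[R]_m) C' : `|y| < e -> `|x| <= C' -> `|dotv x y| <= m%:R * C' * e.
  move=> ye xC; apply: le_trans (normr_dotv_le _ _) _.
  by rewrite ler_pM ?mulr_ge0 ?ler_wpM2l // ltW.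
have nw' : `|w'| <= `|w| + 1.
  rewrite -[w'](subrK w) addrC (le_trans (ler_normD _ _)) // lerD2l ltW //.
  exact: lt_trans e1.
have bZ : `|Z| <= m%:R * (`|w| + 1) * e + m%:R * `|l| * e + `|M| * e.
  apply: le_trans (ler_normD _ _) (lerD (le_trans (ler_normD _ _) (lerD _ _)) _).
  - by rewrite dotvC le_e.
  - by rewrite le_e.
  have : t * `|M| <= e * `|M| by rewrite ler_wpM2r // ltW.
  have : 0 <= t * `|M| by rewrite mulr_ge0 // ltW.
  rewrite !normrM (gtr0_norm t0) (gtr0_norm (_ : 0 < 2^-1)) //; lra.
have bA : `|dotv a (w' - w)| <= m%:R * `|a| * e by rewrite le_e.
have bsZ := ler_wpM2l (normr_ge0 s) bZ; rewrite -normrM in bsZ.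
move: eC bA bsZ; rewrite /C !ler_norml => ? /andP[? ?] /andP[? ?]; lra.
Unshelve. all: by end_near.
Qed.

End NearZero.

Section Subderivatives.
Variables (R : realType) (m : nat).
Implicit Types (g : 'rV[R]_m -> \bar R) (x z v w : 'rV[R]_m).

Lemma lee_quotientl (X : \bar R) (a s q : R) : 0 < q ->
  (s%:E <= (X - a%:E) * (q^-1)%:E)%E = ((a + q * s)%:E <= X)%E.
Proof. by move=> q0; rewrite lee_pdivlMr // -EFinM leeBrDl // -EFinD mulrC. Qed.

Lemma lee_quotientr (X : \bar R) (a s q : R) : 0 < q ->
  ((X - a%:E) * (q^-1)%:E <= s%:E)%E = (X <= (a + q * s)%:E)%E.
Proof. by move=> q0; rewrite lee_pdivrMr // -EFinM leeBlDl // -EFinD mulrC. Qed.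

Lemma subdiff_le g x v y : subdiff g x v ->
  ((fine (g x) + dotv v (y - x))%:E <= g y)%E.
Proof. by case=> gx /(_ y); rewrite -[g x in X in X -> _](fineK gx). Qed.

Lemma subdiff_affineE g z v x : subdiff g z v ->
  subdiff g x v <-> g x = (fine (g z) + dotv v (x - z))%:E.
Proof.
move=> zv; split=> [xv|gxE].
  have [gx _] := xv; rewrite -(fineK gx); congr EFin; apply/le_anti/andP; split.
    by have := subdiff_le z xv; rewrite -(fineK zv.1) lee_fin !dotvBr; lra.
  by have := subdiff_le x zv; rewrite -(fineK gx) lee_fin.
split=> [|y]; first by rewrite gxE.
apply: le_trans (subdiff_le y zv); rewrite gxE /= lee_fin -addrA -dotvDr.
by rewrite [x - z + _]addrC addrA subrK.
Qed.

Lemma subderiv_ge g z w s : g z \is a fin_num ->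
  (\forall e \near 0^'+, forall t w', 0 < t < e -> `|w' - w| < e ->
     ((fine (g z) + t * s)%:E <= g (z + t *: w')%R)%E) ->
  (s%:E <= subderiv g z w)%E.
Proof.
move=> gz /near0_exists[e e0 he]; apply: le_trans (ereal_sup_ubound _); last by exists e.
apply/ereal_infP => _ [t /andP[t0 te] [w' w'e <-]].
by rewrite -[g z](fineK gz) lee_quotientl // he ?t0.
Qed.

Lemma subderiv_le g z w s : g z \is a fin_num ->
  (forall e, 0 < e -> exists t w', [/\ 0 < t < e, `|w' - w| < e &
     (g (z + t *: w')%R <= (fine (g z) + t * s)%:E)%E]) ->
  (subderiv g z w <= s%:E)%E.
Proof.
move=> gz h; apply/ereal_supP => _ [e e0 <-].
have [t [w' [te w'e gle]]] := h e e0; have /andP[t0 _] := te.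
apply: le_trans (ereal_inf_lbound _) _; first by exists t => //; exists w'.
by rewrite -[g z](fineK gz) lee_quotientr.
Qed.

Lemma subdiff_le_subderiv g z lam w : subdiff g z lam ->
  ((dotv lam w)%:E <= subderiv g z w)%E.
Proof.
move=> zl; apply/lee_subgt0Pr => eps eps0; rewrite -EFinB.
apply: subderiv_ge zl.1 _; near=> e.
have e_lam : e * (m%:R * `|lam|) < eps by near: e; exact: near0_mulr_lt.
move=> t w' /andP[t0 te] w'w; apply: le_trans (subdiff_le (z + t *: w') zl).
rewrite lee_fin addrAC subrr add0r dotvZr lerD2l ler_pM2l //.
have : `|dotv lam (w' - w)| < eps.
  apply: le_lt_trans (normr_dotv_le _ _) (le_lt_trans _ e_lam).
  by rewrite mulrC; apply: ler_wpM2r; [rewrite mulr_ge0 | exact: ltW].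
by rewrite dotvBr ltr_norml; lra.
Unshelve. all: by end_near.
Qed.

Lemma lee_diffquot2 g x v t w s : g x \is a fin_num -> 0 < t ->
  (s%:E <= diffquot2 g x v t w)%E =
  ((fine (g x) + t * dotv v w + t ^+ 2 / 2 * s)%:E <= g (x + t *: w)%R)%E.
Proof.
move=> gx t0; rewrite /diffquot2 -[g x](fineK gx) -addeA -EFinN -EFinD -opprD.
by rewrite lee_quotientl // divr_gt0 // exprn_gt0.
Qed.

Lemma diffquot2_ge0 g x v t w :
  subdiff g x v -> 0 < t -> (0 <= diffquot2 g x v t w)%E.
Proof.
move=> xv t0; rewrite lee_diffquot2 ?xv.1 // mulr0 addr0.
by have := subdiff_le (x + t *: w) xv; rewrite addrAC subrr add0r dotvZr.
Qed.

Lemma strict_second_subderiv_ge g xb vb w s :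
  (\forall e \near 0^'+, forall x v w' t,
     [/\ 0 < t < e, `|w' - w| < e, `|x - xb| < e & `|v - vb| < e] ->
     subdiff g x v -> (s%:E <= diffquot2 g x v t w')%E) ->
  (s%:E <= strict_second_subderiv g xb vb w)%E.
Proof.
move=> /near0_exists[e e0 he]; apply: le_trans (ereal_sup_ubound _); last by exists e.
by apply/ereal_infP => _ [x [v [w' [t [bounds [xv _ ->]]]]]]; exact: he.
Qed.

Lemma strict_second_subderiv_ge0 g xb vb w :
  (0 <= strict_second_subderiv g xb vb w)%E.
Proof.
apply: strict_second_subderiv_ge; apply: nearW => e x v w' t [/andP[t0 _] _ _ _] xv.
exact: diffquot2_ge0.
Qed.

Lemma strict_second_subderiv_le g xb vb w s :
  (forall e, 0 < e -> exists x v w' t,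
     [/\ 0 < t < e, `|w' - w| < e, `|x - xb| < e & `|v - vb| < e] /\
     [/\ subdiff g x v, `|fine (g x) - fine (g xb)| < e &
         (diffquot2 g x v t w' <= s%:E)%E]) ->
  (strict_second_subderiv g xb vb w <= s%:E)%E.
Proof.
move=> h; apply/ereal_supP => _ [e e0 <-].
have [x [v [w' [t [bounds [xv gx le_s]]]]]] := h e e0.
apply: le_trans le_s; apply: ereal_inf_lbound.
by exists x, v, w', t.
Qed.

End Subderivatives.

Section PolyhedralCone.
Variables (R : realType) (m k : nat) (G : 'I_k -> 'rV[R]_m) (J : {set 'I_k}).

Definition polycone : set 'rV[R]_m := [set u | forall i, i \in J -> dotv (G i) u <= 0].

Lemma polycone0 : polycone 0.
Proof. by move=> i _; rewrite dotv0r. Qed.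

Lemma polycone_rel_interior : exists2 u0, polycone u0 & forall i, i \in J ->
  (forall u, polycone u -> dotv (G i) u = 0) \/ dotv (G i) u0 < 0.
Proof.
have pick i : exists u, polycone u /\
    ((exists2 u', polycone u' & dotv (G i) u' < 0) -> dotv (G i) u < 0).
  have [[u Ku Giu]|] := pselect (exists2 u', polycone u' & dotv (G i) u' < 0).
    by exists u.
  by move=> nex; exists 0; split=> [|ex]; [exact: polycone0 | case: nex].
have [f /all_and2[Kf fneg]] := choice pick.
have Gsum i : dotv (G i) (\sum_l f l) = \sum_l dotv (G i) (f l) by rewrite dotv_sumr.
have Ksum : polycone (\sum_l f l).
  by move=> i iJ; rewrite Gsum sumr_le0 // => l _; apply: Kf.
exists (\sum_l f l) => // i iJ.
have [[u Ku Giu]|nneg] := pselect (exists2 u', polycone u' & dotv (G i) u' < 0).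
  right; rewrite Gsum (bigD1 i) //= -[X in _ < X]addr0 ltr_leD ?fneg //.
    by exists u.
  by rewrite sumr_le0 // => l _; apply: Kf.
left=> u Ku; apply/eqP; rewrite eq_le Ku //= leNgt; apply/negP => Giu.
by apply: nneg; exists u.
Qed.

Lemma polycone_minus_self w :
  (forall j, j \in J ->
     (forall u, polycone u -> dotv (G j) u = 0) -> dotv (G j) w <= 0) ->
  set_minus_self polycone w.
Proof.
move=> hw; have [u0 Ku0 u0neg] := polycone_rel_interior.
pose s := \sum_q `|dotv (G q) w| / `|dotv (G q) u0|.
have s0 : 0 <= s by apply: sumr_ge0 => q _; rewrite divr_ge0.
exists (w + s *: u0); last first.
  exists (s *: u0); last by rewrite addrK.
  by move=> i iJ; rewrite dotvZr mulr_ge0_le0 ?Ku0.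
move=> i iJ; rewrite dotvDr dotvZr.
have [vanish|Giu0] := u0neg i iJ.
  by rewrite (vanish u0 Ku0) mulr0 addr0 hw.
have le_s : `|dotv (G i) w| / `|dotv (G i) u0| <= s.
  by rewrite /s (bigD1 i) //= lerDl sumr_ge0 // => q _; rewrite divr_ge0.
move: le_s; rewrite ler_pdivrMr ?normr_gt0 ?lt_eqF // (ltr0_norm Giu0).
have := ler_norm (dotv (G i) w); lra.
Qed.

End PolyhedralCone.

Section Farkas.
Variables (R : realType) (V : lmodType R).

Lemma scalarBZ (f : V -> R) :
  scalar f -> forall x y a, f (x - a *: y) = f x - a * f y.
Proof. by move=> lf x y a; rewrite addrC -scaleNr lf mulNr addrC. Qed.

Lemma scalarN (f : V -> R) : scalar f -> forall x, f (- x) = - f x.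
Proof.
move=> lf x; have f0 : f 0 = 0.
  by have := scalarBZ lf 0 0 1; rewrite scale1r mul1r !subrr.
by have := scalarBZ lf 0 x 1; rewrite scale1r sub0r mul1r f0 sub0r.
Qed.

Lemma farkas (n : nat) (a : nat -> V -> R) (b : V -> R) :
  (forall i, scalar (a i)) -> scalar b ->
  (forall x, (forall i, (i < n)%N -> 0 <= a i x) -> 0 <= b x) ->
  exists2 mu : nat -> R, (forall i, 0 <= mu i) &
    forall x, b x = \sum_(i < n) mu i * a i x.
Proof.
elim: n a b => [|n IH] a b la lb h.
  exists (fun=> 0) => // x; rewrite big_ord0.
  have b_ge0 y : 0 <= b y by apply: h => i; rewrite ltn0.
  by apply/eqP; rewrite eq_le b_ge0 andbT -oppr_ge0 -scalarN.
have [h'|] := pselect (forall x, (forall i, (i < n)%N -> 0 <= a i x) -> 0 <= b x).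
  have [mu mu0 bE] := IH a b la lb h'.
  exists (fun i => if (i < n)%N then mu i else 0) => [i|x]; first by case: ifP.
  rewrite big_ord_recr /= ltnn mul0r addr0 bE.
  by apply: eq_bigr => i _; rewrite /= ltn_ord.
move=> /existsNP[x0 /not_implyP[ax0 /negP]]; rewrite -ltNge => bx0.
set an := a n x0.
have an0 : an < 0.
  rewrite ltNge; apply/negP => an0; move: bx0; rewrite ltNge h // => i.
  by rewrite ltnS leq_eqVlt => /orP[/eqP->//|/ax0].
(* Fourier-Motzkin step: restrict everything to the hyperplane [a n = 0] along x0. *)
pose a' i x := a i x - (a i x0 / an) * a n x.
pose b' x := b x - (b x0 / an) * a n x.
have la' i : scalar (a' i) by move=> al x y; rewrite /a' !la; ring.
have lb' : scalar b' by move=> al x y; rewrite /b' lb la; ring.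
have h' x : (forall i, (i < n)%N -> 0 <= a' i x) -> 0 <= b' x.
  move=> hx; pose y := x - (a n x / an) *: x0.
  have ayE i : a i y = a' i x by rewrite scalarBZ // /a'; ring.
  have any : a n y = 0 by rewrite ayE /a' divff ?lt_eqF // mul1r subrr.
  have -> : b' x = b y by rewrite scalarBZ // /b'; ring.
  apply: h => i; rewrite ltnS leq_eqVlt => /orP[/eqP->|hi]; first by rewrite any.
  by rewrite ayE hx.
have [mu mu0 bE] := IH a' b' la' lb' h'.
set S0 := \sum_(i < n) mu i * a i x0.
have S0ge : 0 <= S0 by apply: sumr_ge0 => i _; rewrite mulr_ge0 ?ax0.
pose ka := (b x0 - S0) / an.
have ka0 : 0 <= ka by rewrite /ka ler_ndivlMr // mul0r subr_le0 (le_trans (ltW bx0)).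
exists (fun i => if (i < n)%N then mu i else ka) => [i|x]; first by case: ifP.
rewrite big_ord_recr /= ltnn.
under eq_bigr => i _ do rewrite /= ltn_ord.
have -> : b x = b' x + (b x0 / an) * a n x by rewrite /b' subrK.
rewrite bE /a' /ka.
have -> : \sum_(i < n) mu i * (a i x - a i x0 / an * a n x)
   = \sum_(i < n) mu i * a i x - S0 / an * a n x.
  by rewrite /S0 !mulr_suml -sumrB; apply: eq_bigr => j _; ring.
ring.
Qed.

End Farkas.

Section Multipliers.
Variables (R : realType) (m k : nat) (A : 'I_k -> 'rV[R]_m) (c : 'I_k -> R).

(* [(lam, -1)] is a nonnegative combination of the rows [(A i, c i)], [i \in J]. *)
Definition multiplier (J : {set 'I_k}) (lam : 'rV[R]_m) :=
  exists2 mu : 'I_k -> R, (forall i, 0 <= mu i) &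
    forall u r, dotv lam u - r = \sum_(i in J) mu i * (dotv (A i) u + c i * r).

Lemma multiplier_or_separation J lam : multiplier J lam \/
  exists u r, (forall i, i \in J -> dotv (A i) u + c i * r <= 0) /\ r < dotv lam u.
Proof.
have [|nsep] := pselect (exists u r, (forall i, i \in J -> dotv (A i) u + c i * r <= 0)
  /\ r < dotv lam u); [by right | left].
pose a (i : nat) (p : 'rV[R]_m * R) :=
  if insub i is Some j then (if j \in J then - (dotv (A j) p.1 + c j * p.2) else 0)
  else 0.
pose b (p : 'rV[R]_m * R) := p.2 - dotv lam p.1.
have la i : scalar (a i).
  move=> al x y; rewrite /a; case: (insub i) => [j|]; last by rewrite mulr0 addr0.
  case: ifP => _; rewrite ?mulr0 ?addr0 //= dotvDr dotvZr -[al *: x.2]/(al * x.2).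
  ring.
have lb : scalar b.
  by move=> al x y; rewrite /b /= dotvDr dotvZr -[al *: x.2]/(al * x.2); ring.
have ab p : (forall i, (i < k)%N -> 0 <= a i p) -> 0 <= b p.
  case: p => u r hp; rewrite /b subr_ge0 leNgt; apply/negP => hlt; apply: nsep.
  exists u, r; split => // i iJ; have := hp i (ltn_ord i).
  by rewrite /a valK iJ oppr_ge0.
have [mu mu0 bE] := farkas la lb ab.
exists (mu \o val) => [i|u r]; first exact: mu0.
rewrite -opprB [r - _](bE (u, r)) -sumrN [RHS]big_mkcond.
by apply: eq_bigr => j _; rewrite /a valK; case: ifP => _ /=; ring.
Qed.

End Multipliers.

Section PolyhedralFunction.
Variables (R : realType) (m k : nat) (A : 'I_k -> 'rV[R]_m) (c b : 'I_k -> R).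
Variable g : 'rV[R]_m -> \bar R.
Hypothesis epiE : forall y a, (g y <= a%:E)%E <-> forall i, dotv (A i) y + c i * a <= b i.

Definition active x : {set 'I_k} := [set i | dotv (A i) x + c i * fine (g x) == b i].

Lemma active_le x y a i : g x \is a fin_num -> i \in active x -> (g y <= a%:E)%E ->
  dotv (A i) (y - x) + c i * (a - fine (g x)) <= 0.
Proof.
move=> gx; rewrite inE => /eqP ai /epiE/(_ i).
by rewrite dotvBr mulrBr; lra.
Qed.

Lemma feasible_dir x u r : g x \is a fin_num ->
  (forall i, i \in active x -> dotv (A i) u + c i * r <= 0) ->
  \forall t \near 0^'+, (g (x + t *: u)%R <= (fine (g x) + t * r)%:E)%E.
Proof.
move=> gx hu; suff : \forall t \near 0^'+,
    forall i, dotv (A i) (x + t *: u) + c i * (fine (g x) + t * r) <= b i.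
  by apply: filterS => t ht; apply/epiE.
apply: filter_forall => i.
have step t : dotv (A i) (x + t *: u) + c i * (fine (g x) + t * r)
    = dotv (A i) x + c i * fine (g x) + t * (dotv (A i) u + c i * r).
  by rewrite dotvDr dotvZr; ring.
have [ai|nai] := boolP (i \in active x).
  apply: filterS (nbhs_right_gt 0) => t t0; move: (ai); rewrite inE step => /eqP->.
  by rewrite gerDl pmulr_rle0 ?hu.
have slack : 0 < b i - (dotv (A i) x + c i * fine (g x)).
  rewrite inE in nai; rewrite subr_gt0 lt_neqAle nai /=.
  by move: i {nai step}; apply/epiE; rewrite fineK.
near=> t; rewrite step -lerBrDl ltW //; near: t; exact: near0_mulr_lt.
Unshelve. all: by end_near.
Qed.

Lemma subdiff_dir_le x v u r : subdiff g x v ->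
  (forall i, i \in active x -> dotv (A i) u + c i * r <= 0) -> dotv v u <= r.
Proof.
move=> xv hu; have [t t0 ht] := near0_exists (feasible_dir xv.1 hu).
have := le_trans (subdiff_le (x + t *: u) xv) ht.
by rewrite lee_fin addrAC subrr add0r dotvZr lerD2l ler_pM2l.
Qed.

Lemma subdiff_multiplier x lam : g x \is a fin_num ->
  multiplier A c (active x) lam -> subdiff g x lam.
Proof.
move=> gx [mu mu0 lamE]; split=> // y.
set S := \sum_(i in active x) mu i * b i.
have le_S a : (g y <= a%:E)%E -> dotv lam y - a <= S.
  by move/epiE => hy; rewrite lamE; apply: ler_sum => i _; rewrite ler_wpM2l.
have eq_S : dotv lam x - fine (g x) = S.
  by rewrite lamE; apply: eq_bigr => i; rewrite inE => /eqP->.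
rewrite -(fineK gx) -EFinD; case: (g y) le_S => [a| |] le_S.
- by rewrite lee_fin dotvBr; have := le_S a (lexx _); lra.
- exact: leey.
- by exfalso; have := le_S (dotv lam y - S - 1) (leNye _); lra.
Qed.

Lemma subdiff_near lam : \forall e \near 0^'+, forall x v,
  subdiff g x v -> `|v - lam| < e -> subdiff g x lam.
Proof.
suff : \forall e \near 0^'+, forall J x v,
    subdiff g x v -> `|v - lam| < e -> active x = J -> multiplier A c J lam.
  apply: filterS => e he x v xv ve.
  exact: subdiff_multiplier xv.1 (he (active x) x v xv ve erefl).
apply: filter_forall => J.
have [lamJ | [u [r [uJ ltr]]]] := multiplier_or_separation A c J lam.
  exact: nearW.
(* A separating direction keeps every subgradient with active set J away from lam. *)
near=> e; have eu : e * (m%:R * `|u|) < dotv lam u - r.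
  by near: e; apply: near0_mulr_lt; rewrite subr_gt0.
move=> x v xv ve xJ; exfalso.
have vu : dotv v u <= r by apply: subdiff_dir_le xv _ => i; rewrite xJ; exact: uJ.
have : `|dotv (v - lam) u| < dotv lam u - r.
  apply: le_lt_trans (normr_dotv_le _ _) (le_lt_trans _ eu).
  by rewrite -mulrA mulrCA; apply: ler_wpM2r; [rewrite mulr_ge0 | exact: ltW].
by rewrite dotvBl ltr_norml; lra.
Unshelve. all: by end_near.
Qed.

Lemma diffquot2_ge_active x v t w j M :
  g x \is a fin_num -> j \in active x -> 0 < t ->
  0 < dotv (A j) w + c j * (dotv v w + t * M / 2) -> (M%:E <= diffquot2 g x v t w)%E.
Proof.
move=> gx ajx t0 pos; rewrite lee_diffquot2 // leNgt; apply/negP.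
move=> /ltW /(active_le gx ajx); rewrite addrAC subrr add0r dotvZr.
have -> : t * dotv (A j) w
      + c j * (fine (g x) + t * dotv v w + t ^+ 2 / 2 * M - fine (g x))
    = t * (dotv (A j) w + c j * (dotv v w + t * M / 2)) by ring.
by rewrite pmulr_rle0 // leNgt pos.
Qed.

Section CriticalCone.
Variables zb lam : 'rV[R]_m.
Hypothesis zb_lam : subdiff g zb lam.

Definition active_cone := polycone (fun i => A i + c i *: lam) (active zb).

Lemma active_cone_ray u : active_cone u ->
  \forall t \near 0^'+, g (zb + t *: u)%R = (fine (g zb) + t * dotv lam u)%:E.
Proof.
move=> Ku; have : forall i, i \in active zb -> dotv (A i) u + c i * dotv lam u <= 0.
  by move=> i /Ku; rewrite dotvDl dotvZl.
move/(feasible_dir zb_lam.1); apply: filterS => t le_t; apply/le_anti; rewrite le_t /=.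
by have := subdiff_le (zb + t *: u) zb_lam; rewrite addrAC subrr add0r dotvZr.
Qed.

Lemma crit_cone_sub_active_cone : crit_cone g zb lam `<=` active_cone.
Proof.
move=> u crit_u i ai; rewrite dotvDl dotvZl leNgt; apply/negP => eta0.
set eta := _ + _ in eta0.
have eta2 : 0 < eta / 2 by rewrite divr_gt0.
have [eps eps0 eps_c] := near0_exists (near0_mulr_lt `|c i| eta2).
suff : ((dotv lam u + eps)%:E <= subderiv g zb u)%E by rewrite -crit_u lee_fin; lra.
apply: subderiv_ge zb_lam.1 _; near=> e.
have e_A : e * (m%:R * `|A i|) < eta / 2 by near: e; exact: near0_mulr_lt.
move=> t w' /andP[t0 te] w'u; rewrite leNgt; apply/negP.
move=> /ltW /(active_le zb_lam.1 ai).
rewrite (addrAC zb) (addrAC (fine _)) !subrr !add0r.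
rewrite dotvZr mulrCA -mulrDr pmulr_rle0 //.
have -> : dotv (A i) w' + c i * (dotv lam u + eps)
    = eta + dotv (A i) (w' - u) + c i * eps.
  by rewrite /eta dotvBr; ring.
have : `|dotv (A i) (w' - u)| < eta / 2.
  apply: le_lt_trans (normr_dotv_le _ _) (le_lt_trans _ e_A).
  by rewrite mulrC; apply: ler_wpM2r; [rewrite mulr_ge0 | exact: ltW].
have : - (c i * eps) <= eps * `|c i|.
  by rewrite (le_trans (ler_norm _)) // normrN normrM (gtr0_norm eps0) mulrC.
rewrite ltr_norml => hc /andP[hA _]; lra.
Unshelve. all: by end_near.
Qed.

Lemma active_cone_sub_crit_cone : active_cone `<=` crit_cone g zb lam.
Proof.
move=> u Ku; apply/le_anti; rewrite subdiff_le_subderiv //=.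
apply: subderiv_le zb_lam.1 _ => e e0.
have [t t0 [te gt]] := near0_exists (filterI (nbhs_right_lt e0) (active_cone_ray Ku)).
by exists t, u; rewrite gt t0 te subrr normr0.
Qed.

Lemma crit_coneE : crit_cone g zb lam = active_cone.
Proof.
by apply/seteqP; split; [exact: crit_cone_sub_active_cone | exact: active_cone_sub_crit_cone].
Qed.

Lemma strict_second_subderiv_le0 w : set_minus_self active_cone w ->
  (strict_second_subderiv g zb lam w <= 0)%E.
Proof.
move=> [k1 K1 [k2 K2 <-]]; apply: strict_second_subderiv_le => e e0.
have : \forall t \near 0^'+, [/\ t < e, t * `|k2| < e, t * `|dotv lam k2| < e,
    g (zb + t *: k1)%R = (fine (g zb) + t * dotv lam k1)%:E &
    g (zb + t *: k2)%R = (fine (g zb) + t * dotv lam k2)%:E].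
  near=> t; split; near: t.
  - exact: nbhs_right_lt.
  - exact: near0_mulr_lt.
  - exact: near0_mulr_lt.
  - exact: active_cone_ray.
  - exact: active_cone_ray.
case/near0_exists => t t0 [te tk2 tlam g1 g2].
have x_lam : subdiff g (zb + t *: k2) lam.
  by apply/(subdiff_affineE _ zb_lam); rewrite g2 addrAC subrr add0r dotvZr.
exists (zb + t *: k2), lam, (k1 - k2), t; split; first split.
- by rewrite t0.
- by rewrite subrr normr0.
- by rewrite addrAC subrr add0r normrZ gtr0_norm.
- by rewrite subrr normr0.
split=> //; first by rewrite g2 /= addrAC subrr add0r normrM gtr0_norm.
rewrite /diffquot2 -(addrA zb) -scalerDr addrCA subrr addr0 g1 g2.
rewrite -!EFinB -EFinM lee_fin.
by rewrite dotvBr (_ : _ - _ - _ = 0) ?mul0r //; ring.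
Unshelve. all: by end_near.
Qed.

Lemma active_cone_subdiff x : subdiff g x lam -> active_cone (x - zb).
Proof.
move=> /(subdiff_affineE _ zb_lam) gxE i ai; rewrite dotvDl dotvZl.
have gx_le : (g x <= (fine (g zb) + dotv lam (x - zb))%:E)%E by rewrite gxE.
by have := active_le zb_lam.1 ai gx_le; rewrite (addrAC (fine _)) subrr add0r.
Qed.

Lemma active_subdiff x j : j \in active zb -> subdiff g x lam ->
  dotv (A j + c j *: lam) (x - zb) = 0 -> j \in active x.
Proof.
move=> ajz /(subdiff_affineE _ zb_lam) gxE; rewrite dotvDl dotvZl !inE gxE /=.
by move: ajz; rewrite inE => /eqP <-; rewrite !dotvBr => ?; apply/eqP; lra.
Qed.

Lemma strict_second_subderiv_pinfty w j : j \in active zb ->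
  (forall u, active_cone u -> dotv (A j + c j *: lam) u = 0) ->
  0 < dotv (A j + c j *: lam) w -> strict_second_subderiv g zb lam w = +oo%E.
Proof.
move=> ajz vanish pos; apply/eqyP => M _; apply: strict_second_subderiv_ge; near=> e.
have near_lam : forall x v, subdiff g x v -> `|v - lam| < e -> subdiff g x lam.
  by near: e; exact: subdiff_near.
have near_pos : forall w' v t, `|w' - w| < e -> `|v - lam| < e -> 0 < t < e ->
    0 < dotv (A j) w' + c j * (dotv v w' + t * M / 2).
  by near: e; exact: near_dotv_gt0.
move=> x v w' t [te w'w _ vl] xv; have /andP[t0 _] := te.
have x_lam := near_lam x v xv vl.
apply: diffquot2_ge_active xv.1 _ t0 (near_pos w' v t w'w vl te).
exact/(active_subdiff ajz x_lam)/vanish/active_cone_subdiff.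
Unshelve. all: by end_near.
Qed.

End CriticalCone.

End PolyhedralFunction.

Lemma polyhedral_fun_epiE (R : realType) (m : nat) (g : 'rV[R]_m -> \bar R) :
  polyhedral_fun g -> exists k (A : 'I_k -> 'rV[R]_m) (c b : 'I_k -> R),
    forall y a, (g y <= a%:E)%E <-> forall i, dotv (A i) y + c i * a <= b i.
Proof.
move=> [_ [k [A [c [b epiE]]]]]; exists k, A, c, b => y a.
by have := congr1 (fun C => C (y, a)) epiE; rewrite /epigraph /= => ->.
Qed.

Theorem proposition4p1 (R : realType) (m : nat) (g : 'rV[R]_m -> \bar R)
    (zb lamb : 'rV[R]_m) :
  polyhedral_fun g -> subdiff g zb lamb ->
  forall w : 'rV[R]_m,
    strict_second_subderiv g zb lamb w
    = indicator (set_minus_self (crit_cone g zb lamb)) w.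
Proof.
move=> /polyhedral_fun_epiE[k [A [c [b epiE]]]] zb_lam w.
rewrite (crit_coneE epiE zb_lam).
set G := fun i => A i + c i *: lamb.
have [w_span|] := pselect (forall j, j \in active A c b g zb ->
  (forall u, active_cone A c b g zb lamb u -> dotv (G j) u = 0) -> dotv (G j) w <= 0).
  have span_w := polycone_minus_self w_span.
  rewrite /indicator asboolT //; apply/le_anti.
  by rewrite strict_second_subderiv_ge0 (strict_second_subderiv_le0 epiE zb_lam span_w).
move=> /existsNP[j /not_implyP[ajz /not_implyP[vanish /negP]]]; rewrite -ltNge => pos.
rewrite /indicator asboolF ?(strict_second_subderiv_pinfty epiE zb_lam ajz vanish pos) //.
by move=> [u1 K1 [u2 K2 uw]]; move: pos; rewrite -uw dotvBr !vanish // subrr ltxx.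
Qed.
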